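(* Every finite tree $G$ is diagonal, i.e. $\mathrm{MH}_{k,l}(G)=0$ whenever $k\neq l$.
   Context: All graphs are finite, simple, undirected and connected; $d$ denotes the shortest-path distance on the vertex set $V(G)$. For vertices $x_0,\dots,x_k$ put $\ell(x_0,\dots,x_k)=\sum_{i=0}^{k-1}d(x_i,x_{i+1})$. The magnitude chain complex: $\mathrm{MC}_{k,l}(G)$ is the free abelian group on $I_{k,l}(G)=\{(x_0,\dots,x_k)\in V(G)^{k+1}: x_i\neq x_{i+1}\text{ for all } i,\ \ell(x_0,\dots,x_k)=l\}$, with differential $\partial:\mathrm{MC}_{k,l}(G)\to\mathrm{MC}_{k-1,l}(G)$, $\partial=\sum_{i=1}^{k-1}(-1)^i\partial_i$, where $\partial_i(x_0,\dots,x_k)=(x_0,\dots,\hat x_i,\dots,x_k)$ if $\ell(x_0,\dots,\hat x_i,\dots,x_k)=\ell(x_0,\dots,x_k)$ and $\partial_i(x_0,\dots,x_k)=0$ otherwise. The magnitude homology is $\mathrm{MH}_{k,l}(G)=H_k(\mathrm{MC}_{*,l}(G))$. A graph $G$ is called diagonal if $\mathrm{MH}_{k,l}(G)=0$ whenever $k\neq l$. *)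

From HB Require Import structures.
From mathcomp Require Import all_boot all_order all_algebra.
Set Implicit Arguments. Unset Strict Implicit. Unset Printing Implicit Defensive.
Import Order.TTheory GRing.Theory Num.Theory.

(* A simple graph on a finite vertex type T is a symmetric irreflexive
   relation e : rel T. *)

(* Finite trees: connected and without cycles (a cycle is a duplicate-free
   closed walk x_0 ... x_{n-1} x_0 with n >= 3). *)
Definition is_tree (T : finType) (e : rel T) : Prop :=
  symmetric e /\ irreflexive e /\
  (forall x y : T, connect e x y) /\
  (forall c : seq T, uniq c -> 3 <= size c -> ~~ cycle e c).

Definition walk_len (T : finType) (e : rel T) (x y : T) (n : nat) : bool :=
  [exists p : n.-tuple T, path e x p && (last x p == y)].

(* Shortest-path distance: least n with a walk of length n from x to y
   (in a connected graph such n exists and is < #|T|). *)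
Definition gdist (T : finType) (e : rel T) (x y : T) : nat :=
  find (walk_len e x y) (iota 0 #|T|).

Definition ell (T : finType) (e : rel T) (s : seq T) : nat :=
  match s with
  | [::] => 0
  | x :: s' => sumn (pairmap (gdist e) x s')
  end.

(* membership in I_{k,l}: consecutive entries distinct and length l *)
Definition in_I (T : finType) (e : rel T) (l : nat) (s : seq T) : bool :=
  sorted (fun a b : T => a != b) s && (ell e s == l).

Definition del_at (T : Type) (i : nat) (s : seq T) : seq T :=
  take i s ++ drop i.+1 s.

(* Chains in MC_{k,l}: integer-valued functions on (k+1)-tuples supported
   on I_{k,l} (free abelian group on the finite set I_{k,l}). *)
Definition is_chain (T : finType) (e : rel T) (k l : nat)
  (c : {ffun k.+1.-tuple T -> int}) : Prop :=
  forall x : k.+1.-tuple T, ~~ in_I e l x -> c x = 0%R.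

(* The differential  d = sum_{i=1}^{k-1} (-1)^i d_i  : MC_{k,*} -> MC_{k-1,*},
   written on coefficient functions: (d c)(y) = sum over x and i with
   d_i x = y (nonzero, i.e. length-preserving) of (-1)^i c(x).
   For k = 0 it is the zero map (empty sum). *)
Definition mdiff (T : finType) (e : rel T) (k : nat)
  (c : {ffun k.+1.-tuple T -> int}) : {ffun k.-tuple T -> int} :=
  [ffun y : k.-tuple T =>
     (\sum_(x : k.+1.-tuple T) \sum_(1 <= i < k)
        (if (ell e (del_at i x) == ell e x) && (del_at i x == y :> seq T)
         then (-1) ^+ i * c x else 0))%R].

Definition MH_vanishes (T : finType) (e : rel T) (k l : nat) : Prop :=
  forall c : {ffun k.+1.-tuple T -> int},
    is_chain e l c -> mdiff e c = 0%R ->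
    exists b : {ffun k.+2.-tuple T -> int}, is_chain e l b /\ mdiff e b = c.

Definition diagonal (T : finType) (e : rel T) : Prop :=
  forall k l : nat, k <> l -> MH_vanishes e k l.

From mathcomp Require Import all_boot all_order all_algebra zify.
Set Implicit Arguments. Unset Strict Implicit. Unset Printing Implicit Defensive.
Import GRing.Theory.

(** In a tree, for any two distinct vertices [a, b] there is a
    unique neighbour [toward a b] of [a] on the geodesic from [a] to [b].
    This yields a contracting chain homotopy [H] on the part of the magnitude
    complex spanned by tuples that have a step of length at least 2 or a
    "smooth" triple [x_i, x_(i+1), x_(i+2)] (with [x_(i+1)] on a geodesic from
    [x_i] to [x_(i+2)]): [H] scans the tuple from the left, inserts
    [toward x_i x_(i+1)] at the first long step, and vanishes if a smooth
    triple comes first.  A tuple of [k+1] entries whose length [l] exceeds [k]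
    has a long step, so [H d + d H = id] on [MC_(k,l)] and every cycle there is
    a boundary; for [l < k] the complex [MC_(k,l)] is zero. *)

Section Tree.
Variables (T : finType) (e : rel T).
Hypothesis e_connected : forall x y, connect e x y.
Local Notation d := (gdist e).

Lemma walk_lenP x y n :
  reflect (exists p, [/\ size p = n, path e x p & last x p = y]) (walk_len e x y n).
Proof.
apply: (iffP existsP) => [[p /andP[pp /eqP lp]]|[p [sp pp lp]]].
- by exists p; rewrite size_tuple.
- have sp' : size p == n by rewrite sp.
  by exists (Tuple sp'); rewrite /= pp lp eqxx.
Qed.

Lemma has_walk_len x y : has (walk_len e x y) (iota 0 #|T|).
Proof.
have /connectP[p pp lp] := e_connected x y.
case/shortenP: pp lp => p' pp' up' _ lp'.
apply/hasP; exists (size p'); last by apply/walk_lenP; exists p'.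
rewrite mem_iota add0n.
by have := max_card (mem (x :: p')); rewrite (card_uniqP up').
Qed.

Lemma gdist_lt_card x y : d x y < #|T|.
Proof. by have := has_walk_len x y; rewrite has_find size_iota. Qed.

Lemma gdist_walk x y : walk_len e x y (d x y).
Proof.
have := nth_find 0 (has_walk_len x y).
by rewrite nth_iota ?add0n //; exact: gdist_lt_card.
Qed.

Lemma gdist_min x y n : walk_len e x y n -> d x y <= n.
Proof.
move=> w; rewrite leqNgt; apply/negP => lt.
have := before_find 0 lt; rewrite nth_iota ?add0n ?w //.
exact: ltn_trans lt (gdist_lt_card x y).
Qed.

Lemma gdist_xx x : d x x = 0.
Proof. by apply/eqP; rewrite -leqn0; apply: gdist_min; apply/walk_lenP; exists [::]. Qed.

Lemma gdist_eq0 x y : d x y = 0 -> x = y.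
Proof.
move=> h; have /walk_lenP[p [sp _ <-]] := gdist_walk x y.
by move: sp; rewrite h => /size0nil ->.
Qed.

Lemma gdist_gt0 x y : x != y -> 0 < d x y.
Proof. by move=> nxy; rewrite lt0n; apply: contra nxy => /eqP/gdist_eq0 ->. Qed.

Lemma gdist_triangle x y z : d x z <= d x y + d y z.
Proof.
have /walk_lenP[p [sp pp lp]] := gdist_walk x y.
have /walk_lenP[q [sq pq lq]] := gdist_walk y z.
apply: gdist_min; apply/walk_lenP; exists (p ++ q).
by rewrite size_cat sp sq cat_path last_cat pp lp pq lq.
Qed.

Lemma gdist_edge_le1 x y : e x y -> d x y <= 1.
Proof. by move=> exy; apply: gdist_min; apply/walk_lenP; exists [:: y]; rewrite /= exy. Qed.

Lemma gdist_eq1_edge x y : d x y = 1 -> e x y.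
Proof.
move=> h; have /walk_lenP[p [sp pp lp]] := gdist_walk x y.
by move: sp pp lp; rewrite h; case: p => [|a [|]] //= _; rewrite andbT => ? <-.
Qed.

Lemma gdist_succ a b n : d a b = n.+1 -> exists2 u, e a u & d u b = n.
Proof.
move=> h; have /walk_lenP[p [sp pp lp]] := gdist_walk a b.
move: sp pp lp; rewrite h; case: p => [|u p] //= [sp] /andP[eau pp] lp.
exists u => //; apply/eqP; rewrite eqn_leq gdist_min; last by apply/walk_lenP; exists p.
have := gdist_triangle a u b; have := gdist_edge_le1 eau; rewrite h; lia.
Qed.

Lemma size_le_ell (x : seq T) :
  sorted (fun a b : T => a != b) x -> (size x).-1 <= ell e x.
Proof.
elim: x => [|x0 [|x1 r] IH] //= /andP[n01 sr].
have := IH sr; have := gdist_gt0 n01; rewrite /ell /=; lia.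
Qed.

Hypotheses (e_sym : symmetric e) (e_irr : irreflexive e).
Hypothesis e_acyclic : forall c : seq T, uniq c -> 3 <= size c -> ~~ cycle e c.

Lemma gdist_edge x y : e x y -> d x y = 1.
Proof.
move=> exy; apply/eqP; rewrite eqn_leq gdist_edge_le1 // gdist_gt0 //.
by apply: contraTneq exy => ->; rewrite e_irr.
Qed.

Lemma gdist_edge_lipschitz b a u : e a u -> d u b <= d a b + 1 /\ d a b <= d u b + 1.
Proof.
move=> eau; have h1 := gdist_edge eau.
have h2 : d u a = 1 by apply: gdist_edge; rewrite e_sym.
have := gdist_triangle u a b; have := gdist_triangle a u b; lia.
Qed.

(* Descend from [s] and [t] towards [b] in lockstep until the descents meet. *)
Lemma level_path b m s t : s != t -> d s b = m -> d t b = m ->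
  exists w, [/\ path e s w, last s w = t, uniq (s :: w), 2 <= size w &
             all (fun v => d v b <= m) (s :: w)].
Proof.
elim: m s t => [|m IH] s t nst ds dt.
  by move: nst; rewrite (gdist_eq0 ds) (gdist_eq0 dt) eqxx.
have [s' ess' ds'] := gdist_succ ds.
have [t' ett' dt'] := gdist_succ dt.
have [eq_st'|nst'] := eqVneq s' t'.
  exists [:: s'; t]; split => //=.
  - by rewrite ess' eq_st' e_sym ett'.
  - rewrite !inE negb_or nst andbT; apply/and3P; split => //.
      by apply/eqP => h; move: ds; rewrite h ds'; lia.
    by apply/eqP => h; move: dt; rewrite -h eq_st' dt'; lia.
  - by rewrite ds ds' dt !leqnn leqnSn.
have [w [pw lw uw sw aw]] := IH s' t' nst' ds' dt'.
have below v : v \in s' :: w -> d v b <= m by move=> vin; exact: (allP aw).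
exists (s' :: rcons w t); split => //=.
- by rewrite ess' -cats1 cat_path pw /= lw andbT e_sym.
- by rewrite last_rcons.
- have sn : s \notin s' :: w by apply/negP => /below; rewrite ds ltnn.
  have tn : t \notin s' :: w by apply/negP => /below; rewrite dt ltnn.
  rewrite -rcons_cons mem_rcons -cons_uniq -rcons_cons rcons_uniq inE negb_or nst sn tn /=.
  by move: uw => /= /andP[-> ->].
- by rewrite size_rcons.
- rewrite ds leqnn ds' leqnSn /= all_rcons dt leqnn /=.
  apply/allP => v vw; have := below v; rewrite inE vw orbT => /(_ isT); lia.
Qed.

Lemma gdist_edge_neq b a u : e a u -> d u b <> d a b.
Proof.
move=> eau h.
have nau : a != u by apply: contraTneq eau => ->; rewrite e_irr.
have [w [pw lw uw sw _]] := level_path nau erefl h.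
have := e_acyclic uw; rewrite /= ltnS sw => /(_ isT); apply/negP/negPn.
by rewrite rcons_path pw lw e_sym.
Qed.

Lemma gdist_edge_cases b a u : e a u -> d u b = d a b + 1 \/ d u b + 1 = d a b.
Proof.
by move=> eau; have := gdist_edge_lipschitz b eau; have := @gdist_edge_neq b _ _ eau; lia.
Qed.

Lemma descent_unique a u u' b : e a u -> e a u' ->
  d u b < d a b -> d u' b < d a b -> u = u'.
Proof.
move=> eau eau' lt lt'; apply/eqP/negPn/negP => nuu.
have := gdist_edge_lipschitz b eau; have := gdist_edge_lipschitz b eau' => h1 h2.
have e1 : d u' b = d u b by lia.
have [w [pw lw uw sw aw]] := level_path nuu erefl e1.
have ain : a \notin u :: w by apply/negP => /(allP aw); lia.
have := @e_acyclic (a :: u :: w); rewrite cons_uniq ain uw /= ltnS.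
move=> /(_ isT (ltn_trans (isT : 0 < 1) sw)); apply/negP/negPn.
by rewrite /= eau rcons_path pw lw e_sym eau'.
Qed.

(* Junk value: [toward a a = a]. *)
Definition toward a b := odflt a [pick u | e a u && (d u b < d a b)].

Lemma towardP a b : 0 < d a b -> e a (toward a b) /\ d (toward a b) b + 1 = d a b.
Proof.
move=> pos; rewrite /toward; case: pickP => [u /andP[eau lt]|none] /=.
  by split => //; have := gdist_edge_lipschitz b eau; lia.
have [n dn] : exists n, d a b = n.+1 by exists (d a b).-1; lia.
have [u eau du] := gdist_succ dn.
by have := none u; rewrite eau du dn ltnSn.
Qed.

Lemma toward_unique a u b : e a u -> d u b + 1 = d a b -> toward a b = u.
Proof.
move=> eau h; have [e1 h1] := @towardP a b ltac:(lia).
by apply: (@descent_unique _ _ _ b e1 eau); lia.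
Qed.

Definition between a b c := d a c == d a b + d b c.

Lemma between_edge c x0 x1 : e x0 x1 -> between x0 x1 c = (d x0 c + 1 != d x1 c).
Proof.
move=> e01; rewrite /between (gdist_edge e01).
have e10 : e x1 x0 by rewrite e_sym.
by case: (gdist_edge_cases c e10) => h; do 2 case: eqP => ? /=; rewrite ?h //; lia.
Qed.

Lemma descent_toward_between a u b c : e a u -> d u c + 1 = d a c ->
  d a c = d a b + d b c -> 0 < d a b -> d u b + 1 = d a b.
Proof.
move=> eau hc hb pos; have [e1 h1] := towardP pos.
have := gdist_triangle (toward a b) b c; have := gdist_triangle a (toward a b) c.
rewrite (gdist_edge e1) => t1 t2.
suff -> : u = toward a b by [].
by apply: (@descent_unique _ _ _ c eau e1); lia.
Qed.

Lemma descent_toward_beyond a u b c : e a u -> d u b + 1 = d a b ->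
  d a c = d a b + d b c -> d u c + 1 = d a c.
Proof.
move=> eau h1 h2; have := gdist_triangle u b c; have := gdist_triangle a u c.
rewrite (gdist_edge eau); lia.
Qed.

Lemma notbetween_toward x0 x1 x2 : e x0 x1 -> ~~ between x0 x1 x2 -> 2 <= d x1 x2 ->
  ~~ between x0 x1 (toward x1 x2).
Proof.
move=> e01; rewrite !between_edge // !negbK => /eqP h h2.
have [ey hy] := @towardP x1 x2 ltac:(lia).
have e10 : e x1 x0 by rewrite e_sym.
have <- : x0 = toward x1 x2 by apply: (@descent_unique _ _ _ x2 e10 ey); lia.
by rewrite gdist_xx (gdist_edge e10).
Qed.

Lemma notbetween_beyond x0 x1 x2 x3 : e x0 x1 ->
  ~~ between x0 x1 x2 -> between x1 x2 x3 -> ~~ between x0 x1 x3.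
Proof.
move=> e01; rewrite (between_edge x2 e01) (between_edge x3 e01) !negbK => /eqP h /eqP h2.
have e10 : e x1 x0 by rewrite e_sym.
by apply/eqP; apply: (descent_toward_beyond e10 h h2).
Qed.

Lemma between_beyond x0 x1 x2 x3 : e x0 x1 -> x1 != x2 ->
  between x0 x1 x2 -> between x1 x2 x3 -> between x0 x1 x3.
Proof.
move=> e01 n12; rewrite (between_edge x2 e01) (between_edge x3 e01) => h12 /eqP h2.
apply: contra h12 => /eqP h3; apply/eqP.
have e10 : e x1 x0 by rewrite e_sym.
exact: (descent_toward_between e10 h3 h2 (gdist_gt0 n12)).
Qed.

Lemma toward_between_edge x0 x1 x2 : e x0 x1 -> x1 != x2 -> between x0 x1 x2 ->
  2 <= d x0 x2 /\ toward x0 x2 = x1.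
Proof.
move=> e01 n12 /eqP h; have := gdist_gt0 n12; rewrite (gdist_edge e01) in h => p.
by split; [lia | apply: toward_unique => //; lia].
Qed.

Lemma toward_between x0 x1 x2 : 2 <= d x0 x1 -> between x0 x1 x2 ->
  toward x0 x2 = toward x0 x1.
Proof.
move=> h /eqP hS; have [ey hy] := @towardP x0 x1 ltac:(lia).
by apply: toward_unique => //; apply: (descent_toward_beyond ey hy hS).
Qed.

Lemma between_toward x0 x1 x2 : 2 <= d x0 x1 ->
  between (toward x0 x1) x1 x2 = between x0 x1 x2.
Proof.
move=> h; have [ey hy] := @towardP x0 x1 ltac:(lia).
have ye : e (toward x0 x1) x0 by rewrite e_sym.
apply/idP/idP => /eqP hS; apply/eqP.
  case: (gdist_edge_cases x2 ye) => h2; first by lia.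
  have := descent_toward_between ye h2 hS ltac:(lia); lia.
by have := descent_toward_beyond ey hy hS; lia.
Qed.

Local Open Scope ring_scope.

(* [bd_pair s g] is the value of the cochain [g] on the boundary of the
   generator [s] of the magnitude complex. *)
Definition bd_pair (s : seq T) (g : seq T -> int) : int :=
  \sum_(1 <= i < (size s).-1)
    (if ell e (del_at i s) == ell e s then (-1) ^+ i * g (del_at i s) else 0).

Arguments bd_pair : simpl never.

Lemma bd_pair_small s g : (size s <= 2)%N -> bd_pair s g = 0.
Proof. by move=> h; rewrite /bd_pair big_geq //; case: s h => [|a [|b [|]]]. Qed.

Lemma bd_pair_cons3 a b c r g : bd_pair [:: a, b, c & r] g =
  - (if between a b c then g [:: a, c & r] else 0)
  - bd_pair [:: b, c & r] (fun w => g (a :: w)).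
Proof.
rewrite /bd_pair big_ltn // big_add1 -sumrN; congr (_ + _).
  rewrite /ell /= /between addnA eqn_add2r.
  by case: ifP => _; rewrite ?oppr0 // expr1 mulN1r.
apply: eq_big_nat => -[//|i] _.
rewrite /ell /= eqn_add2l.
by case: ifP => _; rewrite ?oppr0 // exprS mulN1r mulNr.
Qed.

Lemma eq_bd_pair a t g1 g2 : (forall w, g1 (a :: w) = g2 (a :: w)) ->
  bd_pair (a :: t) g1 = bd_pair (a :: t) g2.
Proof. by move=> h; apply: eq_big_nat => -[//|i] _; rewrite /del_at /= h. Qed.

Lemma bd_pairN s g : bd_pair s (fun w => - g w) = - bd_pair s g.
Proof.
rewrite /bd_pair -sumrN; apply: eq_bigr => i _.
by case: ifP => _; rewrite ?oppr0 // mulrN.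
Qed.

Lemma bd_pair0 s : bd_pair s (fun _ => 0) = 0.
Proof. by rewrite /bd_pair big1 // => i _; case: ifP => _; rewrite ?mulr0. Qed.

(* The chain homotopy on generators: [Some (s, w)] stands for [s *: w] and
   [None] for [0]. *)
Fixpoint htp (x : seq T) : option (int * seq T) :=
  if x is x0 :: t then
    if t is x1 :: r then
      if (2 <= d x0 x1)%N then Some (-1, [:: x0, toward x0 x1 & t])
      else if (if r is x2 :: _ then between x0 x1 x2 else false) then None
      else if htp t is Some (s, w) then Some (- s, x0 :: w) else None
    else None
  else None.

Definition htp_pair (x : seq T) (g : seq T -> int) : int :=
  if htp x is Some (s, w) then s * g w else 0.

Arguments htp_pair : simpl never.

Fixpoint nondeg (x : seq T) : bool :=
  if x is x0 :: t then
    if t is x1 :: r then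
      [|| (2 <= d x0 x1)%N, (if r is x2 :: _ then between x0 x1 x2 else false) | nondeg t]
    else false
  else false.

Lemma htpE x0 x1 r : htp [:: x0, x1 & r] =
  if (2 <= d x0 x1)%N then Some (-1, [:: x0, toward x0 x1, x1 & r])
  else if (if r is x2 :: _ then between x0 x1 x2 else false) then None
  else if htp (x1 :: r) is Some (s, w) then Some (- s, x0 :: w) else None.
Proof. by []. Qed.

Arguments htp : simpl never.

Lemma htp_head a t s w : htp (a :: t) = Some (s, w) -> exists w', w = a :: w'.
Proof.
case: t => [//|x1 r]; rewrite htpE; case: ifP => _; first by case=> _ <-; eexists.
case: ifP => _ //; case: (htp (x1 :: r)) => [[s' w']|] //.
by move=> [_ <-]; exists w'.
Qed.

Lemma htp_shape x1 x2 r s w : htp [:: x1, x2 & r] = Some (s, w) ->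
  ((2 <= d x1 x2)%N /\ w = [:: x1, toward x1 x2, x2 & r]) \/
  exists w', w = [:: x1, x2 & w'].
Proof.
rewrite htpE; case: ifP => h2; first by case=> _ <-; left.
case: ifP => _ //; case E: (htp (x2 :: r)) => [[s' w']|] //.
by case=> _ <-; right; have [w'' ->] := htp_head E; eexists.
Qed.

Lemma htp_size x s w : htp x = Some (s, w) -> size w = (size x).+1.
Proof.
elim: x s w => [|x0 [|x1 r] IH] s w //; rewrite htpE; case: ifP => _.
  by case=> _ <-.
case: ifP => _ //; case E: (htp (x1 :: r)) => [[s' w']|] // [_ <-].
by rewrite /= (IH _ _ E).
Qed.

Lemma htp_pair_long x0 x1 w g : (2 <= d x0 x1)%N ->
  htp_pair [:: x0, x1 & w] g = - g [:: x0, toward x0 x1, x1 & w].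
Proof. by move=> h; rewrite /htp_pair htpE h mulN1r. Qed.

Lemma htp_pair_smooth x0 x1 z w g : (d x0 x1 < 2)%N -> between x0 x1 z ->
  htp_pair [:: x0, x1, z & w] g = 0.
Proof. by rewrite ltnNge => /negbTE h1 h2; rewrite /htp_pair htpE h1 h2. Qed.

Lemma htp_pair_cons x0 x1 z w g : (d x0 x1 < 2)%N -> ~~ between x0 x1 z ->
  htp_pair [:: x0, x1, z & w] g = - htp_pair [:: x1, z & w] (fun v => g (x0 :: v)).
Proof.
rewrite ltnNge => /negbTE h1 /negbTE h2; rewrite /htp_pair htpE h1 h2.
by case: (htp [:: x1, z & w]) => [[s v]|]; rewrite ?oppr0 // mulNr.
Qed.

Lemma homotopy_identity_long x0 x1 r g : (2 <= d x0 x1)%N ->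
  htp_pair [:: x0, x1 & r] (fun z => bd_pair z g)
  + bd_pair [:: x0, x1 & r] (fun w => htp_pair w g) = g [:: x0, x1 & r].
Proof.
move=> h01; have [ey hy] := @towardP x0 x1 ltac:(lia).
have Sy : between x0 (toward x0 x1) x1.
  by rewrite /between (gdist_edge ey); apply/eqP; lia.
rewrite htp_pair_long // bd_pair_cons3 Sy.
case: r => [|x2 r]; first by rewrite !bd_pair_small //; lia.
rewrite [bd_pair [:: toward x0 x1, x1, x2 & r] _]bd_pair_cons3.
rewrite [bd_pair [:: x0, x1, x2 & r] _]bd_pair_cons3 between_toward //.
rewrite (@eq_bd_pair x1 _ (fun w => htp_pair (x0 :: w) g)
                      (fun w => - g [:: x0, toward x0 x1 & w])); last first.
  by move=> w /=; rewrite htp_pair_long.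
rewrite bd_pairN; case: ifP => hS; last by lia.
have h02 : (2 <= d x0 x2)%N by move/eqP: hS; lia.
rewrite htp_pair_long // (toward_between h01 hS); lia.
Qed.

Lemma homotopy_identity_smooth x0 x1 x2 r g : e x0 x1 -> x1 != x2 -> between x0 x1 x2 ->
  htp_pair [:: x0, x1, x2 & r] (fun z => bd_pair z g)
  + bd_pair [:: x0, x1, x2 & r] (fun w => htp_pair w g) = g [:: x0, x1, x2 & r].
Proof.
move=> e01 n12 hS; have [h02 hn] := toward_between_edge e01 n12 hS.
have h01 : (d x0 x1 < 2)%N by rewrite gdist_edge.
rewrite htp_pair_smooth // add0r bd_pair_cons3 hS htp_pair_long // hn.
have -> : bd_pair [:: x1, x2 & r] (fun w => htp_pair (x0 :: w) g) = 0.
  case: r => [|x3 r]; first by rewrite bd_pair_small.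
  rewrite bd_pair_cons3 (@eq_bd_pair x2 _ (fun w => htp_pair [:: x0, x1 & w] g) (fun _ => 0));
    last by move=> w /=; rewrite htp_pair_smooth.
  rewrite bd_pair0; case: ifP => h123; last by rewrite oppr0 subr0.
  by rewrite htp_pair_smooth // ?oppr0 ?subr0 // (between_beyond e01 n12 hS h123).
by rewrite opprK subr0.
Qed.

(* [H d + d H = id], tested against an arbitrary cochain [g]. *)
Lemma homotopy_identity x g : sorted (fun a b : T => a != b) x -> nondeg x ->
  htp_pair x (fun z => bd_pair z g) + bd_pair x (fun w => htp_pair w g) = g x.
Proof.
elim: x g => [|x0 [|x1 r] IH] // g /= /andP[n01 sr] ndx.
have [h01|h01] := leqP 2 (d x0 x1); first exact: homotopy_identity_long.
have e01 : e x0 x1 by apply: gdist_eq1_edge; have := gdist_gt0 n01; lia.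
have h01' : (2 <= d x0 x1)%N = false by rewrite leqNgt h01.
case: r IH sr ndx => [|x2 r] IH sr ndx; first by move: ndx; rewrite /= h01'.
have n12 : x1 != x2 by move: sr => /= /andP[].
case hS: (between x0 x1 x2); first exact: homotopy_identity_smooth.
have nd' : nondeg [:: x1, x2 & r] by move: ndx; rewrite /= h01' hS.
have htp_of_bd : htp_pair [:: x0, x1, x2 & r] (fun z => bd_pair z g) =
    htp_pair [:: x1, x2 & r] (fun z => bd_pair z (fun w => g (x0 :: w))).
  rewrite /htp_pair htpE h01' hS.
  case E: (htp [:: x1, x2 & r]) => [[s w]|] //.
  case: (htp_shape E) => [[h12 ->]|[w' ->]].
    rewrite bd_pair_cons3 (negbTE (notbetween_toward e01 (negbT hS) h12)).
    by rewrite oppr0 sub0r mulrNN.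
  by rewrite bd_pair_cons3 hS oppr0 sub0r mulrNN.
have bd_of_htp : bd_pair [:: x1, x2 & r] (fun w => htp_pair (x0 :: w) g) =
    - bd_pair [:: x1, x2 & r] (fun w => htp_pair w (fun v => g (x0 :: v))).
  case: r {IH sr ndx nd' htp_of_bd} => [|x3 r].
    by rewrite !bd_pair_small // oppr0.
  rewrite !bd_pair_cons3 (@eq_bd_pair x2 _ (fun w => htp_pair [:: x0, x1 & w] g)
                           (fun w => - htp_pair (x1 :: w) (fun v => g (x0 :: v)))); last first.
    by move=> w /=; rewrite htp_pair_cons ?hS.
  rewrite bd_pairN; case: ifP => h123; last by lia.
  rewrite htp_pair_cons //; first by lia.
  exact: notbetween_beyond e01 (negbT hS) h123.
have := IH (fun w => g (x0 :: w)) sr nd'.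
rewrite htp_of_bd bd_pair_cons3 hS bd_of_htp; lia.
Qed.

Lemma htp_in_I l x s w : in_I e l x -> htp x = Some (s, w) -> in_I e l w.
Proof.
move=> /andP[]; elim: x l s w => [|x0 [|x1 r] IH] l s w //=.
move=> /andP[n01 sr] /eqP <-; rewrite htpE; case: ifP => h01.
  have [ey hy] := @towardP x0 x1 ltac:(lia).
  move=> [_ <-]; rewrite /in_I /= sr !andbT (gdist_edge ey) -andbA; apply/and3P; split.
  - by apply: contraTneq ey => <-; rewrite e_irr.
  - by apply/eqP => h; move: hy; rewrite h gdist_xx; lia.
  - by apply/eqP; lia.
case: ifP => // _; case E: (htp (x1 :: r)) => [[s' w']|] // [_ <-].
have /andP[sw /eqP ew] := IH _ _ _ sr (eqxx _) E.
have [w'' hw] := htp_head E.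
move: sw ew; rewrite hw /in_I /= n01 /ell /= => -> ->; exact: eqxx.
Qed.

Lemma ell_le_notnondeg x : ~~ nondeg x -> (ell e x <= (size x).-1)%N.
Proof.
elim: x => [|x0 [|x1 r] IH] // ndx.
have [h1 h3] : ~~ (2 <= d x0 x1)%N /\ ~~ nondeg (x1 :: r).
  by move: ndx; rewrite [nondeg _]/= !negb_or => /and3P[].
by have := IH h3; rewrite /ell /= -ltnNge in h1 *; lia.
Qed.

Lemma in_I_nondeg l x : in_I e l x -> ((size x).-1 < l)%N ->
  sorted (fun a b : T => a != b) x && nondeg x.
Proof.
move=> /andP[-> /eqP <-]; rewrite ltnNge; apply: contraNT.
exact: ell_le_notnondeg.
Qed.

End Tree.

Section Chains.
Variables (T : finType) (e : rel T).
Local Open Scope ring_scope.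

Lemma sum_tuple_eq n (w : seq T) (F : seq T -> int) : size w = n ->
  \sum_(z : n.-tuple T) (if w == val z then F (val z) else 0) = F w.
Proof.
move=> hw; have tw : size w == n by rewrite hw.
rewrite (bigD1 (Tuple tw)) //= eqxx big1 ?addr0 // => z nz.
by case: eqP => // wz; move: nz; rewrite (_ : z = Tuple tw) ?eqxx //; apply: val_inj.
Qed.

Lemma sum_tuple_indicator n (y : n.-tuple T) (F : n.-tuple T -> int) :
  \sum_(z : n.-tuple T) F z * (val z == val y)%:R = F y.
Proof.
rewrite (bigD1 y) //= eqxx mulr1 big1 ?addr0 // => z nzy.
by rewrite (inj_eq val_inj) (negbTE nzy) mulr0.
Qed.

Definition htp_chain n (c : {ffun n.-tuple T -> int}) : {ffun n.+1.-tuple T -> int} :=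
  [ffun z => \sum_(x : n.-tuple T)
     c x * (if htp e x is Some (s, w) then (if w == val z then s else 0) else 0)].

Lemma htp_chain0 n : htp_chain (0 : {ffun n.-tuple T -> int}) = 0.
Proof. by apply/ffunP => z; rewrite !ffunE big1 // => x _; rewrite ffunE mul0r. Qed.

Lemma mdiff0 k : mdiff e (0 : {ffun k.+1.-tuple T -> int}) = 0.
Proof.
apply/ffunP => y; rewrite !ffunE big1 // => x _.
by rewrite big1 // => i _; rewrite ffunE mulr0 if_same.
Qed.

Lemma pair_htp_chain n (c : {ffun n.-tuple T -> int}) (g : seq T -> int) :
  \sum_(z : n.+1.-tuple T) htp_chain c z * g z = \sum_(x : n.-tuple T) c x * htp_pair e x g.
Proof.
under eq_bigr do rewrite ffunE mulr_suml.
rewrite exchange_big; apply: eq_bigr => x _; rewrite /htp_pair.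
case E: (htp e x) => [[s w]|]; last by rewrite mulr0 big1 // => z _; rewrite !mul0r.
rewrite -(@sum_tuple_eq n.+1 w (fun v => c x * (s * g v))); last first.
  by rewrite (htp_size E) size_tuple.
by apply: eq_bigr => z _; case: eqP => _; rewrite ?mulr0 ?mul0r // mulrA.
Qed.

Lemma pair_mdiff k (c : {ffun k.+1.-tuple T -> int}) (g : seq T -> int) :
  \sum_(w : k.-tuple T) mdiff e c w * g w = \sum_(x : k.+1.-tuple T) c x * bd_pair e x g.
Proof.
under eq_bigr do rewrite ffunE mulr_suml.
rewrite exchange_big; apply: eq_bigr => x _.
under eq_bigr do rewrite mulr_suml.
rewrite exchange_big /bd_pair size_tuple /= mulr_sumr.
apply: eq_big_nat => i /andP[i1 ik].
have size_del : size (del_at i x) = k.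
  by rewrite /del_at size_cat size_take size_drop size_tuple; case: ifP; lia.
case: (_ == _); last by rewrite mulr0 big1 // => w _; rewrite /= mul0r.
rewrite -(@sum_tuple_eq k (del_at i x) (fun v => c x * ((-1) ^+ i * g v))) //=.
by apply: eq_bigr => w _; case: ifP; rewrite ?mul0r // mulrCA mulrA.
Qed.

Hypotheses (e_sym : symmetric e) (e_irr : irreflexive e).
Hypothesis e_connected : forall x y, connect e x y.
Hypothesis e_acyclic : forall c : seq T, uniq c -> (3 <= size c)%N -> ~~ cycle e c.

Lemma chain_homotopy k (c : {ffun k.+1.-tuple T -> int}) :
  (forall x, c x != 0 -> sorted (fun a b : T => a != b) x && nondeg e x) ->
  mdiff e (htp_chain c) + htp_chain (mdiff e c) = c.
Proof.
move=> c_supp; apply/ffunP => y; rewrite [LHS]ffunE.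
pose dy (w : seq T) : int := (w == val y)%:R.
have -> : mdiff e (htp_chain c) y =
    \sum_(x : k.+1.-tuple T) c x * htp_pair e x (fun z => bd_pair e z dy).
  by rewrite -pair_htp_chain -pair_mdiff sum_tuple_indicator.
have -> : htp_chain (mdiff e c) y =
    \sum_(x : k.+1.-tuple T) c x * bd_pair e x (fun w => htp_pair e w dy).
  by rewrite -pair_mdiff -pair_htp_chain sum_tuple_indicator.
rewrite -big_split /= -[c y](sum_tuple_indicator y c); apply: eq_bigr => x _.
have [-> | cx] := eqVneq (c x) 0; first by rewrite !mul0r.
have /andP[sx ndx] := c_supp x cx.
by rewrite -mulrDr (homotopy_identity e_connected e_sym e_irr e_acyclic).
Qed.

Lemma htp_chain_is_chain l k (c : {ffun k.+1.-tuple T -> int}) :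
  is_chain e l c -> is_chain e l (htp_chain c).
Proof.
move=> c_chain z zI; rewrite ffunE big1 // => x _.
have [-> | cx] := eqVneq (c x) 0; first by rewrite mul0r.
case E: (htp e x) => [[s w]|]; last by rewrite mulr0.
case: eqP => [wz | _]; last by rewrite mulr0.
have xI : in_I e l x by apply: contraNT cx => /c_chain ->.
by move: zI; rewrite -wz (htp_in_I e_connected e_sym e_irr xI E).
Qed.

End Chains.

Theorem proposition3p1 (T : finType) (e : rel T) :
  is_tree e -> diagonal e.
Proof.
move=> [e_sym [e_irr [e_conn e_acyc]]] k l k_neq_l c c_chain c_cycle.
have c_supp x : c x != 0%R -> in_I e l x by apply: contraNT => /c_chain ->.
case: (ltngtP k l) => [k_lt_l | l_lt_k | /k_neq_l //].
- exists (htp_chain e c); split; first exact: htp_chain_is_chain.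
  have := chain_homotopy e_sym e_irr e_conn e_acyc (c := c).
  rewrite c_cycle htp_chain0 addr0; apply=> x /c_supp xI.
  by apply: (in_I_nondeg xI); rewrite size_tuple.
- have c0 : c = 0%R.
    apply/ffunP => x; rewrite ffunE; apply/eqP; apply: contraTT l_lt_k.
    move=> /c_supp /andP[sx /eqP <-]; rewrite -leqNgt.
    by have := size_le_ell e_conn sx; rewrite size_tuple.
  by exists 0%R; split=> [z _|]; rewrite ?ffunE // c0 mdiff0.
Qed.
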